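(* Let $n\in\mathbb{Z}^+$ with $n\geq 2$ and let $\Psi_n:\mathbb{R}\to\mathbb{R}$ be the polynomial of degree $n+4$ $$\Psi_n(t)=\frac{1}{(n+3)(n+4)}\left(t^{n+4}-1\right)+\frac{1}{n(n+1)}t^2\left(t^n-1\right)-\frac{2}{(n+1)(n+3)}t\left(t^{n+2}-1\right).$$ Then $\Psi_n(t)=\sum_{k=5}^{n+4}\frac{\Psi_n^{(k)}(1)}{k!}(t-1)^k$ for all $t\in\mathbb{R}$, and $\Psi_n^{(k)}(1)>0$ for all $5\leq k\leq n+4$. *)

From HB Require Import structures.
From mathcomp Require Import all_boot all_order all_algebra.
From mathcomp Require Import reals.
Set Implicit Arguments. Unset Strict Implicit. Unset Printing Implicit Defensive.
Import Order.TTheory GRing.Theory Num.Theory.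
Local Open Scope ring_scope.

Definition Psi (R : realType) (n : nat) : {poly R} :=
  ((n.+3)%:R * (n.+4)%:R)^-1 *: ('X^(n.+4) - 1)
  + ((n%:R * (n.+1)%:R)^-1 *: ('X^2 * ('X^n - 1)))
  - ((2 / ((n.+1)%:R * (n.+3)%:R)) *: ('X * ('X^(n.+2) - 1))).

(* Psi is a combination of the monomials t^(n+4), t^(n+3), t^(n+2), t^2, t
   and 1, so Psi^(k)(1) is an explicit combination of falling factorials.
   For k >= 3 only the three top monomials contribute; factoring out
   (n+2)^_(k-2) leaves (n(n+1) - 2nM + M(M-1)) / (n(n+1)) with M = n+4-k, and
   the numerator is (n-M)(n+1-M) = (k-4)(k-3).  This vanishes for k = 3, 4 and
   is positive for k >= 5; a direct computation gives Psi^(k)(1) = 0 for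
   k <= 2, so the Taylor expansion of Psi at 1 starts at order 5. *)

From HB Require Import structures.
From mathcomp Require Import all_boot all_order all_algebra.
From mathcomp Require Import reals.
From mathcomp Require Import ring lra zify.
Set Implicit Arguments. Unset Strict Implicit. Unset Printing Implicit Defensive.
Import Order.TTheory GRing.Theory Num.Theory.
Local Open Scope ring_scope.

Lemma horner1_derivnXn (R : nzSemiRingType) m k :
  (('X^m)^`(k)).[1] = (m ^_ k)%:R :> R.
Proof. by rewrite derivnXn hornerMn hornerXn expr1n. Qed.

Section TaylorAtPoint.
Variable R : numFieldType.

Lemma horner_nderivn (p : {poly R}) (x : R) k :
  (p^`N(k)).[x] = (p^`(k)).[x] / k`!%:R.
Proof.
by rewrite nderivn_def hornerMn -mulr_natr mulfK // pnatr_eq0 -lt0n fact_gt0.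
Qed.

Lemma horner_taylor_from (p : {poly R}) (x t : R) (j m : nat) :
  (size p <= m)%N -> (forall k, (k < j)%N -> (p^`(k)).[x] = 0) ->
  p.[t] = \sum_(j <= k < m) (p^`(k)).[x] / k`!%:R * (t - x) ^+ k.
Proof.
move=> size_p low_vanish.
have -> : p.[t] = p.[x + (t - x)] by rewrite addrC subrK.
rewrite (nderiv_taylor_wide (mulrC _ _) size_p) big_geq_mkord [RHS]big_mkcond /=.
apply: eq_bigr => k _; rewrite horner_nderivn.
by case: leqP => // /low_vanish ->; rewrite !mul0r.
Qed.

End TaylorAtPoint.

Section PsiTaylor.
Variables (R : realType) (n : nat).

Let a : R := ((n.+3)%:R * (n.+4)%:R)^-1.
Let b : R := (n%:R * (n.+1)%:R)^-1.
Let c : R := 2 / ((n.+1)%:R * (n.+3)%:R).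

Lemma Psi_monomials :
  Psi R n = a *: ('X^(n.+4) - 1) + b *: ('X^(n.+2) - 'X^2) - c *: ('X^(n.+3) - 'X).
Proof. by rewrite /Psi !mulrBr !mulr1 -exprS -exprD addnC addn2. Qed.

Lemma size_Psi : (size (Psi R n) <= n + 5)%N.
Proof.
apply/leq_sizeP => j le_j; rewrite Psi_monomials !coefE.
have coefXn_high p : (p < n + 5)%N -> (j == p) = false.
  by move=> lt_p; apply/negbTE; rewrite neq_ltn (leq_trans lt_p le_j) orbT.
by rewrite !coefXn_high ?subrr ?mulr0 ?addr0 ?subr0 //; lia.
Qed.

Lemma Psi_derivn_at1 k : ((Psi R n)^`(k)).[1] =
  a * (((n.+4) ^_ k)%:R - (0 ^_ k)%:R) + b * (((n.+2) ^_ k)%:R - (2 ^_ k)%:R)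
  - c * (((n.+3) ^_ k)%:R - (1 ^_ k)%:R).
Proof.
rewrite Psi_monomials -[X in 'X^(n.+4) - X](expr0 'X) -[X in 'X^(n.+3) - X]expr1.
by rewrite !(derivnB, derivnD, derivnZ) !hornerE !horner1_derivnXn.
Qed.

Hypothesis n_gt0 : (0 < n)%N.

Let n_ge1 : (1 : R) <= n%:R.
Proof. by rewrite ler1n. Qed.

Lemma Psi_derivn_at1_lt3 k : (k < 3)%N -> ((Psi R n)^`(k)).[1] = 0.
Proof.
case: k => [|[|[|]]] // _; rewrite Psi_derivn_at1 /a /b /c.
all: rewrite ?ffactSS ?ffactn1 ?ffactn0 /= ?natrM -?natr1.
all: by field; do ?[apply/andP; split]; apply: lt0r_neq0; move: n_ge1; lra.
Qed.

Lemma Psi_derivn3_at1 i : ((Psi R n)^`(i.+3)).[1] =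
  ((n.+2) ^_ i.+1)%:R * (i%:R * (i%:R - 1)) / (n%:R * (n.+1)%:R).
Proof.
rewrite Psi_derivn_at1 (@ffact_small 0) ?(@ffact_small 1) ?(@ffact_small 2) //.
have [le_i|lt_i] := leqP i.+1 n.+2; last first.
  rewrite !ffact_small; try lia.
  by rewrite !(subrr, mulr0, mul0r, addr0).
have -> : (n.+4 ^_ i.+3 = n.+4 * n.+3 * n.+2 ^_ i.+1)%N by rewrite !ffactSS mulnA.
have -> : (n.+3 ^_ i.+3 = n.+3 * (n.+2 ^_ i.+1 * (n.+2 - i.+1)))%N
  by rewrite ffactSS ffactnSr.
have -> : (n.+2 ^_ i.+3 = n.+2 ^_ i.+1 * ((n.+2 - i.+1) * (n.+2 - i.+1).-1))%N
  by rewrite !ffactnSr -subnS -mulnA.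
rewrite !subr0 !natrM; set F : R := (n.+2 ^_ i.+1)%:R; set M := (n.+2 - i.+1)%N.
have -> : M%:R * M.-1%:R = M%:R * (M%:R - 1) :> R.
  by case: M => [|m]; rewrite ?mul0r // -natr1 addrK.
have -> : M%:R = n%:R + 1 - i%:R :> R by rewrite natrB // -!natr1; ring.
rewrite /a /b /c -!natr1.
field; do ?[apply/andP; split]; apply: lt0r_neq0; move: n_ge1; lra.
Qed.

Lemma Psi_derivn_at1_lt5 k : (k < 5)%N -> ((Psi R n)^`(k)).[1] = 0.
Proof.
case: (ltnP k 3) => [/Psi_derivn_at1_lt3 //|].
case: k => [|[|[|[|[|]]]]] // _ _; rewrite Psi_derivn3_at1.
  by rewrite mulr0n !mul0r mulr0 mul0r.
by rewrite mulr1n subrr !(mulr0, mul0r).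
Qed.

Lemma Psi_derivn_at1_gt0 k : (5 <= k <= n + 4)%N -> 0 < ((Psi R n)^`(k)).[1].
Proof.
case: k => [|[|[|i]]] // /andP[i_ge2 i_le]; rewrite Psi_derivn3_at1.
have i_ge2R : (2 : R) <= i%:R by rewrite (ler_nat R 2).
apply: divr_gt0; last by rewrite mulr_gt0 ?ltr0n.
apply: mulr_gt0; last by apply: mulr_gt0; lra.
by rewrite ltr0n ffact_gt0; lia.
Qed.

End PsiTaylor.

Theorem lemma2p3 (R : realType) (n : nat) (hn : (2 <= n)%N) :
  (forall t : R,
     (Psi R n).[t] =
     \sum_(5 <= k < n + 5) ((Psi R n)^`(k)).[1] / (k`!)%:R * (t - 1) ^+ k)
  /\ (forall k : nat, (5 <= k <= n + 4)%N -> 0 < ((Psi R n)^`(k)).[1]).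
Proof.
have n_gt0 : (0 < n)%N by apply: leq_trans hn.
split=> [t|]; last exact: Psi_derivn_at1_gt0 n_gt0.
exact: horner_taylor_from (size_Psi R n) (Psi_derivn_at1_lt5 R n_gt0).
Qed.
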